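(* Under the standing setting, if $f_0\in[0,\infty)$ and $f_\infty\in[0,\infty)$, then there exists $\overline\lambda>0$ such that problem (P$_\lambda$) has no positive solution for any $\lambda\in[0,\overline\lambda)$.
   Context: Standing setting. $\varphi:\mathbb{R}\to\mathbb{R}$ is an odd, increasing homeomorphism satisfying condition (A): there exist increasing homeomorphisms $\psi_1,\psi_2:[0,\infty)\to[0,\infty)$ such that $\varphi(x)\psi_1(y)\le \varphi(xy)\le \varphi(x)\psi_2(y)$ for all $x,y\ge 0$. Let $c,d\in C([0,1],(0,\infty))$, and $\|\cdot\|_\infty$ the maximum norm on $C[0,1]$. Let $f\in C([0,\infty),[0,\infty))$ with $f(s)>0$ for $s>0$, and write $f_0=\lim_{s\to0^+}f(s)/\varphi(s)$, $f_\infty=\lim_{s\to\infty}f(s)/\varphi(s)$ (assumed to exist in $[0,\infty]$ whenever referred to). Let $h\in C((0,1),[0,\infty))$, $h\not\equiv 0$, with $\int_0^{1/2}\psi_1^{-1}\big(\int_s^{1/2}h(\tau)d\tau\big)ds+\int_{1/2}^1\psi_1^{-1}\big(\int_{1/2}^s h(\tau)d\tau\big)ds<\infty$. Notation attached to $h$: $\alpha_h=\sup\{x\in(0,1): h=0 \text{ on }(0,x)\}$ ($0$ if empty); $\beta_h=\inf\{x\in(0,1): h=0\text{ on }(x,1)\}$ ($1$ if empty); $\bar\alpha_h=\sup\{x\in(\alpha_h,1]: h>0 \text{ on }(\alpha_h,x)\}$; $\bar\beta_h=\inf\{x\in[0,\beta_h): h>0\text{ on }(x,\beta_h)\}$; $\gamma_h^1=(3\alpha_h+\bar\alpha_h)/4$,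 $\gamma_h^2=(\bar\beta_h+3\beta_h)/4$. It is assumed that $0\le\alpha_h<\gamma_h^1<\gamma_h^2<\beta_h\le 1$. For $\lambda\ge0$, problem (P$_\lambda$) is: $(d(t)\varphi(c(t)u'(t)))'+\lambda h(t)f(u(t))=0$ for $t\in(0,1)$, $u(0)=u(1)=0$. A solution is $u\in C[0,1]\cap C^1(0,1)$ such that $t\mapsto d(t)\varphi(c(t)u'(t))$ is continuously differentiable on $(0,1)$ and the equation and boundary conditions hold; it is positive if $u(t)>0$ for all $t\in(0,1)$. *)

From Stdlib Require Import Reals Lra ClassicalEpsilon.
Open Scope R_scope.

Definition cont_on (g : R -> R) (P : R -> Prop) : Prop :=
  forall x, P x -> forall eps, 0 < eps ->
    exists delta, 0 < delta /\
      forall y, P y -> Rabs (y - x) < delta -> Rabs (g y - g x) < eps.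

Definition odd_inc_homeo (phi : R -> R) : Prop :=
  (forall x y, x < y -> phi x < phi y) /\
  (forall x, continuity_pt phi x) /\
  (forall y, exists x, phi x = y) /\
  (forall x, phi (- x) = - phi x).

(* Increasing homeomorphism of [0,oo) onto [0,oo) (values off [0,oo) irrelevant).
   Continuity of the inverse is automatic for an increasing bijection of intervals. *)
Definition inc_homeo_nonneg (p : R -> R) : Prop :=
  (forall x, 0 <= x -> 0 <= p x) /\
  (forall x y, 0 <= x -> x < y -> p x < p y) /\
  (forall y, 0 <= y -> exists x, 0 <= x /\ p x = y) /\
  cont_on p (fun x => 0 <= x).

Definition condA (phi psi1 psi2 : R -> R) : Prop :=
  inc_homeo_nonneg psi1 /\ inc_homeo_nonneg psi2 /\
  forall x y, 0 <= x -> 0 <= y ->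
    phi x * psi1 y <= phi (x * y) /\ phi (x * y) <= phi x * psi2 y.

(* Riemann integral as a relation and as a total function (the value is the
   genuine Riemann integral whenever g is Riemann integrable on [a,b]). *)
Definition Rint (g : R -> R) (a b v : R) : Prop :=
  exists pr : Riemann_integrable g a b, RiemannInt pr = v.

Definition integral (g : R -> R) (a b : R) : R :=
  epsilon (inhabits 0) (fun v => Rint g a b v).

(* Finiteness of improper integrals of nonnegative functions,
   singular at the left endpoint / the right endpoint. *)
Definition improper_finite_left (g : R -> R) (a b : R) : Prop :=
  exists M, forall e, a < e <= b -> integral g e b <= M.
Definition improper_finite_right (g : R -> R) (a b : R) : Prop :=
  exists M, forall e, a <= e < b -> integral g a e <= M.

Definition h_integrability (h psi1inv : R -> R) : Prop :=
  improper_finite_left (fun s => psi1inv (integral h s (1/2))) 0 (1/2) /\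
  improper_finite_right (fun s => psi1inv (integral h (1/2) s)) (1/2) 1.

Definition is_glb (S : R -> Prop) (m : R) : Prop :=
  (forall x, S x -> m <= x) /\ (forall m', (forall x, S x -> m' <= x) -> m' <= m).

Definition alpha_set (h : R -> R) (x : R) : Prop :=
  0 < x < 1 /\ forall t, 0 < t < x -> h t = 0.
Definition is_alpha (h : R -> R) (a : R) : Prop :=
  ((exists x, alpha_set h x) /\ is_lub (alpha_set h) a) \/
  ((~ exists x, alpha_set h x) /\ a = 0).

Definition beta_set (h : R -> R) (x : R) : Prop :=
  0 < x < 1 /\ forall t, x < t < 1 -> h t = 0.
Definition is_beta (h : R -> R) (b : R) : Prop :=
  ((exists x, beta_set h x) /\ is_glb (beta_set h) b) \/
  ((~ exists x, beta_set h x) /\ b = 1).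

Definition alphabar_set (h : R -> R) (a x : R) : Prop :=
  a < x <= 1 /\ forall t, a < t < x -> 0 < h t.
Definition is_alphabar (h : R -> R) (a ab : R) : Prop :=
  (exists x, alphabar_set h a x) /\ is_lub (alphabar_set h a) ab.

Definition betabar_set (h : R -> R) (b x : R) : Prop :=
  0 <= x < b /\ forall t, x < t < b -> 0 < h t.
Definition is_betabar (h : R -> R) (b bb : R) : Prop :=
  (exists x, betabar_set h b x) /\ is_glb (betabar_set h b) bb.

(* Standing assumption 0 <= alpha_h < gamma^1_h < gamma^2_h < beta_h <= 1. *)
Definition gamma_condition (h : R -> R) : Prop :=
  exists a b ab bb,
    is_alpha h a /\ is_beta h b /\ is_alphabar h a ab /\ is_betabar h b bb /\
    0 <= a /\ a < (3 * a + ab) / 4 /\ (3 * a + ab) / 4 < (bb + 3 * b) / 4 /\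
    (bb + 3 * b) / 4 < b /\ b <= 1.

Definition is_solution (phi c d h f : R -> R) (lam : R) (u : R -> R) : Prop :=
  cont_on u (fun t => 0 <= t <= 1) /\
  exists up wp : R -> R,
    (forall t, 0 < t < 1 -> derivable_pt_lim u t (up t)) /\
    cont_on up (fun t => 0 < t < 1) /\
    (forall t, 0 < t < 1 ->
       derivable_pt_lim (fun s => d s * phi (c s * up s)) t (wp t)) /\
    cont_on wp (fun t => 0 < t < 1) /\
    (forall t, 0 < t < 1 -> wp t + lam * h t * f (u t) = 0) /\
    u 0 = 0 /\ u 1 = 0.

Definition is_positive_solution (phi c d h f : R -> R) (lam : R) (u : R -> R) : Prop :=
  is_solution phi c d h f lam u /\ forall t, 0 < t < 1 -> 0 < u t.

Definition lim_at_0plus (g : R -> R) (L : R) : Prop :=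
  forall eps, 0 < eps -> exists delta, 0 < delta /\
    forall s, 0 < s < delta -> Rabs (g s - L) < eps.
Definition lim_at_infty (g : R -> R) (L : R) : Prop :=
  forall eps, 0 < eps -> exists M, forall s, M < s -> Rabs (g s - L) < eps.

(* The limits give f <= K phi on (0,oo), and c >= cmin, d >= dmin
   on [0,1].  Let u be a positive solution, M = u(t0) its maximum (t0 interior,
   u'(t0) = 0) and w = d phi(c u') its flux.  Then w(t0) = 0 and
   |w'| = lambda h f(u) <= lambda K phi(M) h, so for t <= t0 <= 1/2 we get
   |w(t)| <= lambda K phi(M) I(t) with I(t) = int_t^{1/2} h (symmetrically with
   J(t) = int_{1/2}^t h when t0 >= 1/2).  The lower half of condition (A),
   phi(M) psi1(y) <= phi(M y), turns this into |u'(t)| <= (M/cmin) psi1inv(eps I(t))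
   with eps = lambda K / dmin, and integrating, M - u(e) <= (M/cmin)
   int_e^{1/2} psi1inv(eps I).  The integrability condition on h makes this
   integral small uniformly in e as eps -> 0, so u >= M/2 near the endpoint,
   which contradicts u = 0 there. *)

From Stdlib Require Import Reals Lra ClassicalEpsilon Classical.
From Coquelicot Require Import Coquelicot.
Open Scope R_scope.

Lemma cont_on_interior (g : R -> R) (P : R -> Prop) x r :
  cont_on g P -> 0 < r -> (forall y, Rabs (y - x) < r -> P y) -> continuity_pt g x.
Proof.
  intros Hg Hr HP.
  unfold continuity_pt, continue_in, limit1_in, limit_in; simpl; unfold R_dist.
  intros eps Heps.
  assert (Px : P x) by (apply HP; rewrite Rminus_diag, Rabs_R0; lra).
  destruct (Hg x Px eps Heps) as [dl [Hdl H]].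
  exists (Rmin dl r); split; [apply Rmin_pos; lra|].
  intros y [_ Hy]. apply H.
  - apply HP, Rlt_le_trans with (1 := Hy), Rmin_r.
  - apply Rlt_le_trans with (1 := Hy), Rmin_l.
Qed.

Lemma cont_open01 (g : R -> R) x : cont_on g (fun t => 0 < t < 1) -> 0 < x < 1 ->
  continuous g x.
Proof.
  intros Hg Hx. apply continuity_pt_filterlim.
  apply (cont_on_interior g _ x (Rmin x (1 - x)) Hg); [apply Rmin_pos; lra|].
  intros y Hy. pose proof (Rmin_l x (1 - x)). pose proof (Rmin_r x (1 - x)).
  apply Rabs_def2 in Hy. lra.
Qed.

(* Projection of R onto [0,1]; it turns relative continuity on [0,1] into
   continuity on R, as required by the extreme value theorems of Stdlib. *)
Definition clamp01 (t : R) : R := Rmax 0 (Rmin 1 t).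

Lemma clamp01_in t : 0 <= clamp01 t <= 1.
Proof. unfold clamp01, Rmax, Rmin; repeat destruct Rle_dec; lra. Qed.

Lemma clamp01_id t : 0 <= t <= 1 -> clamp01 t = t.
Proof. unfold clamp01, Rmax, Rmin; repeat destruct Rle_dec; lra. Qed.

Lemma clamp01_contracting x y : Rabs (clamp01 y - clamp01 x) <= Rabs (y - x).
Proof.
  unfold clamp01, Rmax, Rmin, Rabs;
    repeat destruct Rle_dec; repeat destruct Rcase_abs; lra.
Qed.

Lemma clamp01_cont (g : R -> R) x : cont_on g (fun t => 0 <= t <= 1) ->
  continuity_pt (fun t => g (clamp01 t)) x.
Proof.
  intros Hg.
  unfold continuity_pt, continue_in, limit1_in, limit_in; simpl; unfold R_dist.
  intros eps Heps.
  destruct (Hg (clamp01 x) (clamp01_in x) eps Heps) as [dl [Hdl H]].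
  exists dl; split; [exact Hdl|].
  intros y [_ Hy]. apply H; [apply clamp01_in|].
  eapply Rle_lt_trans; [apply clamp01_contracting|exact Hy].
Qed.

Lemma cont_on01_min (g : R -> R) : cont_on g (fun t => 0 <= t <= 1) ->
  exists t1, 0 <= t1 <= 1 /\ forall t, 0 <= t <= 1 -> g t1 <= g t.
Proof.
  intros Hg.
  destruct (continuity_ab_min (fun t => g (clamp01 t)) 0 1 ltac:(lra)
     (fun c _ => clamp01_cont g c Hg)) as [mn [H1 H2]].
  exists mn. split; [exact H2|]. intros t Ht. specialize (H1 t Ht).
  now rewrite (clamp01_id t Ht), (clamp01_id mn H2) in H1.
Qed.

Lemma cont_on01_max (g : R -> R) : cont_on g (fun t => 0 <= t <= 1) ->
  exists t1, 0 <= t1 <= 1 /\ forall t, 0 <= t <= 1 -> g t <= g t1.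
Proof.
  intros Hg.
  destruct (continuity_ab_maj (fun t => g (clamp01 t)) 0 1 ltac:(lra)
     (fun c _ => clamp01_cont g c Hg)) as [mx [H1 H2]].
  exists mx. split; [exact H2|]. intros t Ht. specialize (H1 t Ht).
  now rewrite (clamp01_id t Ht), (clamp01_id mx H2) in H1.
Qed.

Lemma cont_on01_pos_lower (g : R -> R) : cont_on g (fun t => 0 <= t <= 1) ->
  (forall t, 0 <= t <= 1 -> 0 < g t) ->
  exists m, 0 < m /\ forall t, 0 < t < 1 -> m <= g t.
Proof.
  intros Hg Hp. destruct (cont_on01_min g Hg) as [t1 [Ht1 Hmin]].
  exists (g t1). split; [apply Hp, Ht1|]. intros t Ht. apply Hmin. lra.
Qed.

Lemma small_near_0 (u : R -> R) m r : cont_on u (fun t => 0 <= t <= 1) ->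
  u 0 = 0 -> 0 < m -> 0 < r <= 1 -> exists e, 0 < e < r /\ u e < m.
Proof.
  intros Hu Hu0 Hm Hr.
  destruct (Hu 0 ltac:(lra) m Hm) as [dl [Hdl Hcl]].
  pose proof (Rmin_l (dl / 2) (r / 2)). pose proof (Rmin_r (dl / 2) (r / 2)).
  assert (He : 0 < Rmin (dl / 2) (r / 2)) by (apply Rmin_pos; lra).
  set (e := Rmin (dl / 2) (r / 2)) in *.
  exists e. split; [lra|].
  assert (Hd : Rabs (u e - u 0) < m).
  { apply Hcl; [cbv beta; lra|]. rewrite Rminus_0_r, Rabs_pos_eq; lra. }
  rewrite Hu0, Rminus_0_r in Hd. apply Rabs_def2 in Hd. lra.
Qed.

Lemma small_near_1 (u : R -> R) m r : cont_on u (fun t => 0 <= t <= 1) ->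
  u 1 = 0 -> 0 < m -> 0 <= r < 1 -> exists e, r < e < 1 /\ u e < m.
Proof.
  intros Hu Hu1 Hm Hr.
  destruct (Hu 1 ltac:(lra) m Hm) as [dl [Hdl Hcl]].
  set (e := 1 - Rmin (dl / 2) ((1 - r) / 2)).
  pose proof (Rmin_l (dl / 2) ((1 - r) / 2)). pose proof (Rmin_r (dl / 2) ((1 - r) / 2)).
  assert (Hpos : 0 < Rmin (dl / 2) ((1 - r) / 2)) by (apply Rmin_pos; lra).
  exists e. split; [unfold e; lra|].
  assert (Hd : Rabs (u e - u 1) < m).
  { apply Hcl; [cbv beta; unfold e; lra|]. unfold e. rewrite Rabs_left; lra. }
  rewrite Hu1, Rminus_0_r in Hd. apply Rabs_def2 in Hd. lra.
Qed.

Lemma integral_RInt g a b : ex_RInt g a b -> integral g a b = RInt g a b.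
Proof.
  intros H. pose proof (ex_RInt_Reals_0 _ _ _ H) as pr.
  assert (Hex : exists v, Rint g a b v) by (exists (RiemannInt pr); exists pr; auto).
  unfold integral.
  destruct (epsilon_spec (inhabits 0) (fun v => Rint g a b v) Hex) as [pr' Hpr'].
  rewrite <- Hpr'. symmetry. apply RInt_Reals.
Qed.

Lemma ex_RInt_open01 g a b : cont_on g (fun t => 0 < t < 1) -> 0 < a < 1 -> 0 < b < 1 ->
  ex_RInt g a b.
Proof.
  intros Hg Ha Hb. apply (@ex_RInt_continuous R_CompleteNormedModule). intros z Hz.
  apply cont_open01; [exact Hg|].
  pose proof (Rmin_l a b). pose proof (Rmin_r a b).
  pose proof (Rmax_l a b). pose proof (Rmax_r a b).
  assert (Rmin a b = a \/ Rmin a b = b) by (unfold Rmin; destruct Rle_dec; auto).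
  assert (Rmax a b = a \/ Rmax a b = b) by (unfold Rmax; destruct Rle_dec; auto).
  lra.
Qed.

Lemma ftc01 F F' a b : (forall t, 0 < t < 1 -> derivable_pt_lim F t (F' t)) ->
  cont_on F' (fun t => 0 < t < 1) -> 0 < a -> a <= b -> b < 1 ->
  F b - F a = RInt F' a b.
Proof.
  intros HD HC Ha Hab Hb. symmetry. apply is_RInt_unique.
  apply (@is_RInt_derive R_CompleteNormedModule F F' a b).
  - intros x Hx. rewrite Rmin_left, Rmax_right in Hx by lra.
    apply is_derive_Reals, HD. lra.
  - intros x Hx. rewrite Rmin_left, Rmax_right in Hx by lra.
    apply cont_open01; [exact HC|lra].
Qed.

Lemma increment_le_RInt F F' g a b :
  (forall t, 0 < t < 1 -> derivable_pt_lim F t (F' t)) ->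
  cont_on F' (fun t => 0 < t < 1) -> 0 < a -> a <= b -> b < 1 ->
  ex_RInt g a b -> (forall t, a < t < b -> Rabs (F' t) <= g t) ->
  Rabs (F b - F a) <= RInt g a b.
Proof.
  intros HD HC Ha Hab Hb Hg Hbound.
  assert (HF' : ex_RInt F' a b) by (apply ex_RInt_open01; auto; lra).
  rewrite (ftc01 F F' a b HD HC Ha Hab Hb).
  eapply Rle_trans; [apply abs_RInt_le; auto|].
  apply RInt_le; auto. apply (ex_RInt_norm F' a b HF').
Qed.

Lemma Chasles_R f a b c : ex_RInt f a b -> ex_RInt f b c ->
  RInt f a c = RInt f a b + RInt f b c.
Proof. intros. rewrite <- (RInt_Chasles f a b c); auto. Qed.

Lemma RInt_scal_R g a b k : ex_RInt g a b -> RInt (fun s => k * g s) a b = k * RInt g a b.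
Proof. intros He. exact (@RInt_scal R_CompleteNormedModule g a b k He). Qed.

Lemma ex_RInt_scal_R g a b k : ex_RInt g a b -> ex_RInt (fun s => k * g s) a b.
Proof. intros He. exact (@ex_RInt_scal R_CompleteNormedModule g a b k He). Qed.

Lemma RInt_le_const g a b k : a <= b -> ex_RInt g a b -> (forall x, a < x < b -> g x <= k) ->
  RInt g a b <= (b - a) * k.
Proof.
  intros Hab Hg Hk. replace ((b - a) * k) with (RInt (fun _ => k) a b).
  - apply RInt_le; auto. apply ex_RInt_const.
  - rewrite RInt_const. reflexivity.
Qed.

Lemma RInt_reflect (k : R -> R) a b : ex_RInt k a b ->
  RInt k a b = RInt (fun s => k (1 - s)) (1 - b) (1 - a).
Proof.
  intros He. symmetry. apply (@is_RInt_unique R_CompleteNormedModule).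
  pose proof (@RInt_correct R_CompleteNormedModule k a b He) as H1.
  apply (@is_RInt_swap R_NormedModule) in H1.
  assert (H2 : is_RInt k (-1 * (1 - b) + 1) (-1 * (1 - a) + 1) (opp (RInt k a b))).
  { replace (-1 * (1 - b) + 1) with b by ring. replace (-1 * (1 - a) + 1) with a by ring.
    exact H1. }
  apply (@is_RInt_comp_lin R_NormedModule) in H2.
  apply (@is_RInt_scal R_NormedModule _ _ _ (-1)) in H2.
  replace (RInt k a b) with (@scal R_AbsRing R_NormedModule (-1) (@opp R_NormedModule (RInt k a b)))
    by (change (-1 * - RInt k a b = RInt k a b); ring).
  eapply (@is_RInt_ext R_NormedModule); [|exact H2].
  intros x _. change (-1 * (-1 * k (-1 * x + 1)) = k (1 - x)).
  replace (-1 * x + 1) with (1 - x) by ring. ring.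
Qed.

Section Psi1Inverse.
Variables psi1 psi1inv : R -> R.
Hypothesis psi1_nonneg : forall x, 0 <= x -> 0 <= psi1 x.
Hypothesis psi1_inc : forall x y, 0 <= x -> x < y -> psi1 x < psi1 y.
Hypothesis psi1inv_spec : forall y, 0 <= y -> 0 <= psi1inv y /\ psi1 (psi1inv y) = y.

Lemma psi1_le x y : 0 <= x -> x <= y -> psi1 x <= psi1 y.
Proof. intros. destruct (Req_dec x y) as [->|]; [lra|]. left; apply psi1_inc; lra. Qed.

Lemma psi1_le_inv x y : 0 <= x -> 0 <= y -> psi1 x <= psi1 y -> x <= y.
Proof. intros. destruct (Rle_lt_dec x y); auto. pose proof (psi1_inc y x). lra. Qed.

Lemma psi1inv_mono a b : 0 <= a -> a <= b -> psi1inv a <= psi1inv b.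
Proof.
  intros. destruct (psi1inv_spec a) as [A1 A2]; auto.
  destruct (psi1inv_spec b) as [B1 B2]; [lra|].
  apply psi1_le_inv; auto. lra.
Qed.

Lemma psi1inv_psi1 x : 0 <= x -> psi1inv (psi1 x) = x.
Proof.
  intros Hx. destruct (psi1inv_spec (psi1 x) (psi1_nonneg x Hx)) as [C1 C2].
  apply Rle_antisym; apply psi1_le_inv; auto; lra.
Qed.

(* psi1inv is continuous on [0,oo), being the inverse of an increasing bijection;
   we extend it to R by composing with the projection onto [0,oo). *)
Lemma psi1inv_cont y0 : continuity_pt (fun y => psi1inv (Rmax 0 y)) y0.
Proof.
  unfold continuity_pt, continue_in, limit1_in, limit_in; simpl; unfold R_dist.
  intros eps Heps.
  set (yv := Rmax 0 y0). assert (Hyv : 0 <= yv) by apply Rmax_l.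
  destruct (psi1inv_spec yv Hyv) as [X1 X2]. set (x0 := psi1inv yv) in *.
  (* gaps between yv and the images of x0 +- eps/2 *)
  set (g1 := psi1 (x0 + eps / 2) - yv).
  assert (Hg1 : 0 < g1).
  { unfold g1. rewrite <- X2. pose proof (psi1_inc x0 (x0 + eps / 2)). lra. }
  set (g2 := if Rlt_dec 0 (x0 - eps / 2) then yv - psi1 (x0 - eps / 2) else 1).
  assert (Hg2 : 0 < g2).
  { unfold g2; destruct Rlt_dec; [|lra].
    rewrite <- X2. pose proof (psi1_inc (x0 - eps / 2) x0). lra. }
  exists (Rmin g1 g2). split; [apply Rmin_pos; auto|].
  intros y [_ Hy]. pose proof (Rmin_l g1 g2). pose proof (Rmin_r g1 g2).
  assert (Hz : Rabs (Rmax 0 y - yv) < Rmin g1 g2).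
  { eapply Rle_lt_trans; [|exact Hy]. unfold yv, Rmax, Rabs;
      repeat destruct Rle_dec; repeat destruct Rcase_abs; lra. }
  set (z := Rmax 0 y) in *. assert (Hz0 : 0 <= z) by apply Rmax_l.
  destruct (psi1inv_spec z Hz0) as [Z1 Z2]. set (x := psi1inv z) in *.
  apply Rabs_def2 in Hz. apply Rabs_def1.
  - destruct (Rlt_le_dec (x - x0) eps); auto.
    pose proof (psi1_le (x0 + eps / 2) x ltac:(lra) ltac:(lra)). unfold g1 in *. lra.
  - destruct (Rlt_le_dec (- eps) (x - x0)); auto.
    unfold g2 in *. destruct Rlt_dec; [|lra].
    pose proof (psi1_le x (x0 - eps / 2) Z1 ltac:(lra)). lra.
Qed.

Lemma ex_RInt_psi1inv_comp (G : R -> R) eps a b : 0 <= eps -> a <= b ->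
  (forall t, a <= t <= b -> continuous G t) -> (forall t, a <= t <= b -> 0 <= G t) ->
  ex_RInt (fun t => psi1inv (eps * G t)) a b.
Proof.
  intros He Hab HGc HG0.
  apply (ex_RInt_ext (fun t => psi1inv (Rmax 0 (eps * G t)))).
  { intros x Hx. rewrite Rmin_left, Rmax_right in Hx by lra.
    rewrite Rmax_right; auto. apply Rmult_le_pos; auto. apply HG0; lra. }
  apply (@ex_RInt_continuous R_CompleteNormedModule). intros z Hz.
  rewrite Rmin_left, Rmax_right in Hz by lra.
  apply (continuous_comp (fun s => eps * G s) (fun y => psi1inv (Rmax 0 y))).
  - apply (continuous_scal_r eps G z), HGc, Hz.
  - apply continuity_pt_filterlim, psi1inv_cont.
Qed.

End Psi1Inverse.

Section Phi.
Variable phi : R -> R.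
Hypothesis Hphi : odd_inc_homeo phi.

Lemma phi_0 : phi 0 = 0.
Proof. destruct Hphi as [_ [_ [_ Ho]]]. specialize (Ho 0). rewrite Ropp_0 in Ho. lra. Qed.

Lemma phi_pos s : 0 < s -> 0 < phi s.
Proof. intros Hs. pose proof phi_0. destruct Hphi as [Hi _]. specialize (Hi 0 s Hs). lra. Qed.

Lemma phi_le x y : x <= y -> phi x <= phi y.
Proof. destruct Hphi as [Hi _]. intros H. destruct (Req_dec x y) as [->|]; [lra|]. left; apply Hi; lra. Qed.

Lemma phi_le_inv x y : phi x <= phi y -> x <= y.
Proof. intros H. destruct (Rle_lt_dec x y); auto. destruct Hphi as [Hi _]. specialize (Hi y x r). lra. Qed.

Lemma phi_Rabs x : Rabs (phi x) = phi (Rabs x).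
Proof.
  destruct (Rle_lt_dec 0 x) as [Hx|Hx].
  - rewrite !Rabs_pos_eq; auto. rewrite <- phi_0. now apply phi_le.
  - destruct Hphi as [_ [_ [_ Ho]]].
    rewrite (Rabs_left x), Ho by lra. apply Rabs_left.
    rewrite <- phi_0. destruct Hphi as [Hi _]. now apply Hi.
Qed.

(* If f/phi has finite limits at 0+ and at +oo, then f <= K phi on (0,oo):
   near 0 and near oo by the limits, in between by compactness. *)
Lemma f_le_K_phi (f : R -> R) f0 finf : cont_on f (fun s => 0 <= s) ->
  lim_at_0plus (fun s => f s / phi s) f0 -> lim_at_infty (fun s => f s / phi s) finf ->
  exists K, 0 < K /\ forall s, 0 < s -> f s <= K * phi s.
Proof.
  intros Hf H0 Hi.
  destruct (H0 1 ltac:(lra)) as [dl [Hdl Hd]].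
  destruct (Hi 1 ltac:(lra)) as [N HN].
  set (q := fun s => f s / phi s).
  set (b := Rmax N dl + 1).
  assert (Hb : dl / 2 <= b) by (unfold b; pose proof (Rmax_r N dl); lra).
  destruct (continuity_ab_maj q (dl / 2) b Hb) as [Mx [HM1 HM2]].
  { intros c Hc. unfold q. apply continuity_pt_div.
    - apply (cont_on_interior f _ c (dl / 2) Hf); [lra|].
      intros y Hy. apply Rabs_def2 in Hy. lra.
    - destruct Hphi as [_ [Hc' _]]. apply Hc'.
    - pose proof (phi_pos c ltac:(lra)). lra. }
  set (K := Rmax (Rmax (f0 + 1) (finf + 1)) (Rmax 1 (q Mx))).
  assert (HK1 : f0 + 1 <= K /\ finf + 1 <= K /\ 1 <= K /\ q Mx <= K).
  { unfold K. pose proof (Rmax_l (Rmax (f0 + 1) (finf + 1)) (Rmax 1 (q Mx))).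
    pose proof (Rmax_r (Rmax (f0 + 1) (finf + 1)) (Rmax 1 (q Mx))).
    pose proof (Rmax_l (f0 + 1) (finf + 1)). pose proof (Rmax_r (f0 + 1) (finf + 1)).
    pose proof (Rmax_l 1 (q Mx)). pose proof (Rmax_r 1 (q Mx)). lra. }
  exists K. split; [lra|].
  intros s Hs.
  assert (Hq : f s / phi s <= K).
  { destruct (Rlt_le_dec s dl).
    - specialize (Hd s ltac:(lra)). apply Rabs_def2 in Hd. lra.
    - destruct (Rlt_le_dec N s) as [HNs|HNs].
      + specialize (HN s HNs). apply Rabs_def2 in HN. lra.
      + assert (q s <= q Mx) by (apply HM1; unfold b; pose proof (Rmax_l N dl); lra).
        unfold q in *. lra. }
  pose proof (phi_pos s Hs).
  apply (Rmult_le_compat_r (phi s)) in Hq; [|lra].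
  unfold Rdiv in Hq. rewrite Rmult_assoc, Rinv_l, Rmult_1_r in Hq by lra. exact Hq.
Qed.

End Phi.

Section UniformSmallness.
Variables psi1 psi1inv G : R -> R.
Hypothesis psi1_nonneg : forall x, 0 <= x -> 0 <= psi1 x.
Hypothesis psi1_inc : forall x y, 0 <= x -> x < y -> psi1 x < psi1 y.
Hypothesis psi1inv_spec : forall y, 0 <= y -> 0 <= psi1inv y /\ psi1 (psi1inv y) = y.
Hypothesis G_nonneg : forall t, 0 < t <= 1/2 -> 0 <= G t.
Hypothesis G_noninc : forall s t, 0 < s <= t -> t <= 1/2 -> G t <= G s.
Hypothesis G_cont : forall t, 0 < t <= 1/2 -> continuous G t.
Hypothesis G_improper : exists B, forall e, 0 < e <= 1/2 ->
  RInt (fun t => psi1inv (G t)) e (1/2) <= B.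

Lemma ex_RInt_profile eps a b : 0 <= eps -> 0 < a <= b -> b <= 1/2 ->
  ex_RInt (fun t => psi1inv (eps * G t)) a b.
Proof.
  intros. apply (ex_RInt_psi1inv_comp psi1 psi1inv); auto; try lra;
    intros; [apply G_cont | apply G_nonneg]; lra.
Qed.

Lemma ex_RInt_profile1 a b : 0 < a <= b -> b <= 1/2 ->
  ex_RInt (fun t => psi1inv (G t)) a b.
Proof.
  intros. apply (ex_RInt_ext (fun t => psi1inv (1 * G t))).
  - intros; now rewrite Rmult_1_l.
  - apply ex_RInt_profile; lra.
Qed.

(* Cauchy criterion for the improper integral: its initial pieces are small. *)
Lemma profile_initial_small eta : 0 < eta -> exists d, 0 < d <= 1/2 /\
  forall e, 0 < e <= d -> RInt (fun t => psi1inv (G t)) e d <= eta.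
Proof.
  intros Heta. destruct G_improper as [B HB].
  set (F := fun e => RInt (fun t => psi1inv (G t)) e (1/2)).
  set (E := fun y => exists e, 0 < e <= 1/2 /\ y = F e).
  assert (Hb : bound E) by (exists B; intros y [e [He ->]]; apply HB; auto).
  assert (Hne : exists y, E y) by (exists (F (1/2)), (1/2); split; auto; lra).
  destruct (completeness E Hb Hne) as [L [HL1 HL2]].
  assert (Hd : exists d, 0 < d <= 1/2 /\ L - eta < F d).
  { apply NNPP. intros Hn.
    assert (L <= L - eta); [|lra].
    apply HL2. intros y [e [He ->]].
    destruct (Rle_lt_dec (F e) (L - eta)); auto. exfalso; apply Hn; exists e; auto. }
  destruct Hd as [d [Hd HFd]].
  exists d. split; [exact Hd|]. intros e He.
  assert (HFe : F e <= L) by (apply HL1; exists e; split; auto; lra).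
  unfold F in *. rewrite (Chasles_R _ e d (1/2)) in HFe by (apply ex_RInt_profile1; lra).
  lra.
Qed.

Lemma profile_uniform_small eta : 0 < eta -> exists e0, 0 < e0 /\
  forall eps e, 0 <= eps <= e0 -> 0 < e <= 1/2 ->
  RInt (fun t => psi1inv (eps * G t)) e (1/2) <= eta.
Proof.
  intros Heta.
  destruct (profile_initial_small (eta / 2)) as [d [Hd Hinit]]; [lra|].
  assert (Hp : 0 < psi1 (eta / 2)).
  { pose proof (psi1_nonneg 0). pose proof (psi1_inc 0 (eta / 2)). lra. }
  assert (HGd := G_nonneg d Hd).
  set (e0 := Rmin 1 (psi1 (eta / 2) / (G d + 1))).
  assert (He0 : 0 < e0 <= 1 /\ e0 * (G d + 1) <= psi1 (eta / 2)).
  { pose proof (Rmin_l 1 (psi1 (eta / 2) / (G d + 1))).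
    pose proof (Rmin_r 1 (psi1 (eta / 2) / (G d + 1))).
    assert (0 < e0) by (apply Rmin_pos; [lra|apply Rdiv_lt_0_compat; lra]).
    split; [unfold e0 in *; lra|].
    apply Rle_trans with (psi1 (eta / 2) / (G d + 1) * (G d + 1)).
    - apply Rmult_le_compat_r; [lra|exact H0].
    - right. field. lra. }
  exists e0. split; [lra|]. intros eps e Heps He.
  assert (Hfar : forall t, d <= t <= 1/2 -> psi1inv (eps * G t) <= eta / 2).
  { intros t Ht. rewrite <- (psi1inv_psi1 psi1 psi1inv psi1_nonneg psi1_inc psi1inv_spec (eta / 2)) by lra.
    assert (G t <= G d) by (apply G_noninc; lra).
    assert (0 <= G t) by (apply G_nonneg; lra).
    apply (psi1inv_mono psi1 psi1inv psi1_inc psi1inv_spec); [apply Rmult_le_pos; lra|].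
    apply Rle_trans with (e0 * (G d + 1)); [|lra]. apply Rmult_le_compat; lra. }
  destruct (Rle_lt_dec e d) as [Hed|Hed].
  - rewrite (Chasles_R _ e d (1/2)) by (apply ex_RInt_profile; lra).
    assert (RInt (fun t => psi1inv (eps * G t)) d (1/2) <= (1/2 - d) * (eta / 2)).
    { apply RInt_le_const; [lra|apply ex_RInt_profile; lra|]. intros; apply Hfar; lra. }
    assert (RInt (fun t => psi1inv (eps * G t)) e d <= RInt (fun t => psi1inv (G t)) e d).
    { apply RInt_le; [lra|apply ex_RInt_profile; lra|apply ex_RInt_profile1; lra|].
      intros x Hx. assert (0 <= G x) by (apply G_nonneg; lra).
      apply (psi1inv_mono psi1 psi1inv psi1_inc psi1inv_spec); [apply Rmult_le_pos; lra|].
      rewrite <- (Rmult_1_l (G x)) at 2. apply Rmult_le_compat_r; lra. }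
    specialize (Hinit e ltac:(lra)). nra.
  - assert (RInt (fun t => psi1inv (eps * G t)) e (1/2) <= (1/2 - e) * (eta / 2)).
    { apply RInt_le_const; [lra|apply ex_RInt_profile; lra|]. intros; apply Hfar; lra. }
    nra.
Qed.

End UniformSmallness.

(* h is continuous and nonnegative on (0,1); its profiles I(s) = int_s^{1/2} h and
   J(s) = int_{1/2}^s h are the quantities controlling the flux of a solution. *)
Section Profiles.
Variable h : R -> R.
Hypothesis h_cont : cont_on h (fun t => 0 < t < 1).
Hypothesis h_nonneg : forall t, 0 < t < 1 -> 0 <= h t.

Let ex_RInt_h a b : 0 < a < 1 -> 0 < b < 1 -> ex_RInt h a b := ex_RInt_open01 h a b h_cont.

Lemma J_cont t : 0 < t < 1 -> continuous (fun s => RInt h (1/2) s) t.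
Proof.
  intros Ht. apply (continuous_RInt_1 h (1/2) t).
  apply (locally_interval _ t 0 1); simpl; try lra.
  intros y Hy1 Hy2. apply (@RInt_correct R_CompleteNormedModule), ex_RInt_h; lra.
Qed.

Lemma I_cont t : 0 < t < 1 -> continuous (fun s => RInt h s (1/2)) t.
Proof.
  intros Ht. apply (continuous_ext_loc _ (fun s => opp (RInt h (1/2) s))).
  - apply (locally_interval _ t 0 1); simpl; try lra.
    intros y Hy1 Hy2. apply (@opp_RInt_swap R_CompleteNormedModule), ex_RInt_h; lra.
  - apply (@continuous_opp R_UniformSpace R_AbsRing R_NormedModule), J_cont, Ht.
Qed.

Lemma RInt_h_nonneg a b : 0 < a <= b -> b < 1 -> 0 <= RInt h a b.
Proof. intros. apply RInt_ge_0; [lra|apply ex_RInt_h; lra|]. intros; apply h_nonneg; lra. Qed.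

Lemma RInt_h_mono a b c : 0 < a <= b -> b <= c -> c < 1 -> RInt h a b <= RInt h a c.
Proof.
  intros. rewrite (Chasles_R h a b c) by (apply ex_RInt_h; lra).
  pose proof (RInt_h_nonneg b c). lra.
Qed.

Lemma RInt_h_mono_l a b c : 0 < a <= b -> b <= c -> c < 1 -> RInt h b c <= RInt h a c.
Proof.
  intros. rewrite (Chasles_R h a b c) by (apply ex_RInt_h; lra).
  pose proof (RInt_h_nonneg a b). lra.
Qed.

Lemma integral_RInt_ext g g' a b : a <= b ->
  (forall x, a < x < b -> g x = g' x) -> ex_RInt g' a b -> integral g a b = RInt g' a b.
Proof.
  intros Hab Hext Hex.
  assert (Hext' : forall x, Rmin a b < x < Rmax a b -> g' x = g x)
    by (intros x Hx; rewrite Rmin_left, Rmax_right in Hx by lra; symmetry; apply Hext, Hx).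
  rewrite integral_RInt by exact (ex_RInt_ext _ _ _ _ Hext' Hex).
  apply RInt_ext. intros x Hx. symmetry. apply Hext'. exact Hx.
Qed.

Variables psi1 psi1inv : R -> R.
Hypothesis psi1_nonneg : forall x, 0 <= x -> 0 <= psi1 x.
Hypothesis psi1_inc : forall x y, 0 <= x -> x < y -> psi1 x < psi1 y.
Hypothesis psi1inv_spec : forall y, 0 <= y -> 0 <= psi1inv y /\ psi1 (psi1inv y) = y.
Hypothesis h_int : h_integrability h psi1inv.

Lemma ex_RInt_I_profile eps a b : 0 <= eps -> 0 < a <= b -> b <= 1/2 ->
  ex_RInt (fun s => psi1inv (eps * RInt h s (1/2))) a b.
Proof.
  intros. apply (ex_RInt_psi1inv_comp psi1 psi1inv); auto; try lra.
  - intros; apply I_cont; lra.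
  - intros; apply RInt_h_nonneg; lra.
Qed.

Lemma ex_RInt_J_profile eps a b : 0 <= eps -> 1/2 <= a <= b -> b < 1 ->
  ex_RInt (fun s => psi1inv (eps * RInt h (1/2) s)) a b.
Proof.
  intros. apply (ex_RInt_psi1inv_comp psi1 psi1inv); auto; try lra.
  - intros; apply J_cont; lra.
  - intros; apply RInt_h_nonneg; lra.
Qed.

Lemma I_profile_small eta : 0 < eta -> exists e0, 0 < e0 /\
  forall eps e, 0 <= eps <= e0 -> 0 < e <= 1/2 ->
  RInt (fun s => psi1inv (eps * RInt h s (1/2))) e (1/2) <= eta.
Proof.
  apply (profile_uniform_small psi1 psi1inv (fun s => RInt h s (1/2))); auto.
  - intros; apply RInt_h_nonneg; lra.
  - intros; apply RInt_h_mono_l; lra.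
  - intros; apply I_cont; lra.
  - destruct h_int as [[B HB] _]. exists B. intros e He.
    rewrite <- (integral_RInt_ext (fun s => psi1inv (integral h s (1/2)))); [apply HB, He|lra| |].
    + intros x Hx. rewrite integral_RInt by (apply ex_RInt_h; lra). reflexivity.
    + apply (ex_RInt_ext (fun s => psi1inv (1 * RInt h s (1/2)))).
      * intros; now rewrite Rmult_1_l.
      * apply ex_RInt_I_profile; lra.
Qed.

(* Uniform smallness near t = 1: reflect J through s |-> 1 - s. *)
Lemma J_profile_small eta : 0 < eta -> exists e0, 0 < e0 /\
  forall eps e, 0 <= eps <= e0 -> 1/2 <= e < 1 ->
  RInt (fun s => psi1inv (eps * RInt h (1/2) s)) (1/2) e <= eta.
Proof.
  intros Heta.
  set (G := fun s => RInt h (1/2) (1 - s)).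
  assert (HJ1 : forall eps e, 0 <= eps -> 1/2 <= e < 1 ->
    RInt (fun s => psi1inv (eps * RInt h (1/2) s)) (1/2) e
    = RInt (fun s => psi1inv (eps * G s)) (1 - e) (1/2)).
  { intros eps e Heps He. rewrite RInt_reflect by (apply ex_RInt_J_profile; lra).
    now replace (1 - 1/2) with (1/2) by field. }
  destruct (profile_uniform_small psi1 psi1inv G) with (eta := eta) as [e0 [He0 Hsmall]]; auto.
  - intros; apply RInt_h_nonneg; lra.
  - intros; apply RInt_h_mono; lra.
  - intros t Ht. apply (continuous_comp (fun s => 1 - s) (fun t => RInt h (1/2) t)).
    + apply (continuity_pt_filterlim (fun s => 1 - s)), continuity_pt_minus.
      * apply continuity_pt_const. intros ? ?; auto.
      * apply derivable_continuous_pt, derivable_pt_id.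
    + apply J_cont; lra.
  - destruct h_int as [_ [B HB]]. exists B. intros e He.
    specialize (HB (1 - e) ltac:(lra)).
    rewrite (integral_RInt_ext _ (fun s => psi1inv (1 * RInt h (1/2) s))) in HB; [|lra| |].
    + rewrite (RInt_ext _ (fun s => psi1inv (1 * G s))) by (intros; now rewrite Rmult_1_l).
      replace e with (1 - (1 - e)) at 1 by ring.
      rewrite <- (HJ1 1 (1 - e)) by lra. exact HB.
    + intros x Hx. rewrite Rmult_1_l, integral_RInt by (apply ex_RInt_h; lra). reflexivity.
    + apply ex_RInt_J_profile; lra.
  - exists e0. split; [exact He0|]. intros eps e Heps He.
    rewrite HJ1 by lra. apply Hsmall; lra.
Qed.

Lemma profiles_small eta : 0 < eta -> exists e0, 0 < e0 /\ forall eps, 0 <= eps <= e0 ->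
  (forall e, 0 < e <= 1/2 -> RInt (fun s => psi1inv (eps * RInt h s (1/2))) e (1/2) <= eta) /\
  (forall e, 1/2 <= e < 1 -> RInt (fun s => psi1inv (eps * RInt h (1/2) s)) (1/2) e <= eta).
Proof.
  intros Heta.
  destruct (I_profile_small eta Heta) as [eL [HeL HL]].
  destruct (J_profile_small eta Heta) as [eR [HeR HR]].
  exists (Rmin eL eR). split; [apply Rmin_pos; auto|].
  intros eps Heps. pose proof (Rmin_l eL eR). pose proof (Rmin_r eL eR).
  split; intros; [apply HL|apply HR]; auto; lra.
Qed.

End Profiles.

Lemma interior_max (u up : R -> R) : cont_on u (fun t => 0 <= t <= 1) ->
  u 0 = 0 -> u 1 = 0 -> (forall t, 0 < t < 1 -> 0 < u t) ->
  (forall t, 0 < t < 1 -> derivable_pt_lim u t (up t)) ->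
  exists t0, 0 < t0 < 1 /\ (forall t, 0 < t < 1 -> u t <= u t0) /\ up t0 = 0.
Proof.
  intros Hu Hu0 Hu1 Hpos Hud.
  destruct (cont_on01_max u Hu) as [t0 [Ht0 Hmax]].
  assert (Hhalf : 0 < u (1/2)) by (apply Hpos; lra).
  pose proof (Hmax (1/2) ltac:(lra)).
  assert (Ht0' : 0 < t0 < 1).
  { destruct (Req_dec t0 0) as [->|]; [lra|]. destruct (Req_dec t0 1) as [->|]; [lra|]. lra. }
  exists t0. split; [exact Ht0'|]. split; [intros; apply Hmax; lra|].
  pose (pr := exist (fun l => derivable_pt_lim u t0 l) (up t0) (Hud t0 Ht0') : derivable_pt u t0).
  change (derive_pt u t0 pr = 0).
  apply (deriv_maximum u 0 1 t0 pr); try lra. intros; apply Hmax; lra.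
Qed.

Section APriori.
Variables phi psi1 psi1inv c d h f u up wp : R -> R.
Variables lam K cmin dmin M t0 : R.
Hypothesis Hphi : odd_inc_homeo phi.
Hypothesis condA_lower : forall x y, 0 <= x -> 0 <= y -> phi x * psi1 y <= phi (x * y).
Hypothesis psi1_inc : forall x y, 0 <= x -> x < y -> psi1 x < psi1 y.
Hypothesis psi1inv_spec : forall y, 0 <= y -> 0 <= psi1inv y /\ psi1 (psi1inv y) = y.
Hypothesis cmin_pos : 0 < cmin.
Hypothesis c_lower : forall t, 0 < t < 1 -> cmin <= c t.
Hypothesis dmin_pos : 0 < dmin.
Hypothesis d_lower : forall t, 0 < t < 1 -> dmin <= d t.
Hypothesis K_nonneg : 0 <= K.
Hypothesis f_nonneg : forall s, 0 <= s -> 0 <= f s.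
Hypothesis f_bound : forall s, 0 < s -> f s <= K * phi s.
Hypothesis lam_nonneg : 0 <= lam.
Hypothesis h_cont : cont_on h (fun t => 0 < t < 1).
Hypothesis h_nonneg : forall t, 0 < t < 1 -> 0 <= h t.
Hypothesis u_deriv : forall t, 0 < t < 1 -> derivable_pt_lim u t (up t).
Hypothesis up_cont : cont_on up (fun t => 0 < t < 1).
Hypothesis w_deriv : forall t, 0 < t < 1 ->
  derivable_pt_lim (fun s => d s * phi (c s * up s)) t (wp t).
Hypothesis wp_cont : cont_on wp (fun t => 0 < t < 1).
Hypothesis equation : forall t, 0 < t < 1 -> wp t + lam * h t * f (u t) = 0.
Hypothesis u_pos : forall t, 0 < t < 1 -> 0 < u t.
Hypothesis u_le_M : forall t, 0 < t < 1 -> u t <= M.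
Hypothesis t0_in : 0 < t0 < 1.
Hypothesis u_t0 : u t0 = M.
Hypothesis up_t0 : up t0 = 0.

Let w := fun s => d s * phi (c s * up s).
Let Q := lam * K * phi M.
Let eps := lam * K / dmin.

Lemma M_pos : 0 < M.
Proof. rewrite <- u_t0. apply u_pos, t0_in. Qed.

Lemma Q_nonneg : 0 <= Q.
Proof. unfold Q. pose proof (phi_pos phi Hphi M M_pos). apply Rmult_le_pos; [apply Rmult_le_pos|]; lra. Qed.

Lemma eps_nonneg : 0 <= eps.
Proof. unfold eps. apply Rmult_le_pos; [apply Rmult_le_pos; lra|left; apply Rinv_0_lt_compat; lra]. Qed.

(* The equation and f(u) <= K phi(u) <= K phi(M) bound the derivative of the flux. *)
Lemma wp_abs_le s : 0 < s < 1 -> Rabs (wp s) <= Q * h s.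
Proof.
  intros Hs. pose proof (equation s Hs). pose proof (h_nonneg s Hs).
  pose proof (u_pos s Hs).
  assert (Hfu : 0 <= f (u s) <= K * phi M).
  { split; [apply f_nonneg; lra|]. eapply Rle_trans; [apply f_bound; lra|].
    apply Rmult_le_compat_l; [lra|]. apply (phi_le phi Hphi), u_le_M, Hs. }
  assert (Hp : 0 <= lam * h s * f (u s) <= lam * h s * (K * phi M)).
  { split; [apply Rmult_le_pos; [apply Rmult_le_pos|]; lra|].
    apply Rmult_le_compat_l; [apply Rmult_le_pos|]; lra. }
  rewrite Rabs_left1 by lra. unfold Q. lra.
Qed.

Lemma w_variation a b : 0 < a <= b -> b < 1 -> Rabs (w b - w a) <= Q * RInt h a b.
Proof.
  intros Ha Hb. rewrite <- RInt_scal_R by (apply ex_RInt_open01; auto; lra).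
  apply (increment_le_RInt w wp); auto; try lra.
  - apply ex_RInt_scal_R, ex_RInt_open01; auto; lra.
  - intros; apply wp_abs_le; lra.
Qed.

(* Condition (A) converts a bound on the flux into a bound on u'. *)
Lemma up_from_flux t G : 0 < t < 1 -> 0 <= G -> Rabs (w t) <= Q * G ->
  Rabs (up t) <= M / cmin * psi1inv (eps * G).
Proof.
  intros Ht HG Hw.
  assert (HeG : 0 <= eps * G) by (apply Rmult_le_pos; auto; apply eps_nonneg).
  destruct (psi1inv_spec _ HeG) as [Y1 Y2]. set (y := psi1inv (eps * G)) in *.
  pose proof M_pos. pose proof (c_lower t Ht). pose proof (d_lower t Ht).
  set (x := Rabs (c t * up t)).
  assert (Hx : 0 <= x) by apply Rabs_pos.
  assert (Hphix : 0 <= phi x) by (rewrite <- (phi_0 phi Hphi); apply (phi_le phi Hphi), Hx).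
  assert (Hwt : Rabs (w t) = d t * phi x).
  { unfold w, x. rewrite Rabs_mult, (phi_Rabs phi Hphi), Rabs_pos_eq; lra. }
  assert (Hdx : dmin * phi x <= lam * K * phi M * G).
  { apply Rle_trans with (d t * phi x); [apply Rmult_le_compat_r; lra|]. unfold Q in Hw. lra. }
  assert (Hpx : phi x <= phi (M * y)).
  { eapply Rle_trans; [|apply condA_lower; lra]. rewrite Y2. unfold eps.
    apply (Rmult_le_reg_l dmin); auto.
    replace (dmin * (phi M * (lam * K / dmin * G))) with (lam * K * phi M * G) by (field; lra).
    exact Hdx. }
  apply (phi_le_inv phi Hphi) in Hpx.
  unfold x in Hpx. rewrite Rabs_mult, (Rabs_pos_eq (c t)) in Hpx by lra.
  assert (cmin * Rabs (up t) <= M * y).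
  { eapply Rle_trans; [|apply Hpx]. apply Rmult_le_compat_r; [apply Rabs_pos|lra]. }
  apply (Rmult_le_reg_l cmin); auto. field_simplify; lra.
Qed.

Lemma w_t0 : w t0 = 0.
Proof. unfold w. rewrite up_t0, Rmult_0_r, (phi_0 phi Hphi). ring. Qed.

Lemma up_bound_left t : 0 < t <= t0 -> t0 <= 1/2 ->
  Rabs (up t) <= M / cmin * psi1inv (eps * RInt h t (1/2)).
Proof.
  intros Ht Ht0. apply up_from_flux; [lra|apply (RInt_h_nonneg h); auto; lra|].
  pose proof (w_variation t t0 Ht ltac:(lra)) as Hv.
  rewrite w_t0, Rminus_0_l, Rabs_Ropp in Hv.
  eapply Rle_trans; [exact Hv|]. apply Rmult_le_compat_l; [apply Q_nonneg|].
  apply (RInt_h_mono h); auto; lra.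
Qed.

Lemma up_bound_right t : t0 <= t < 1 -> 1/2 <= t0 ->
  Rabs (up t) <= M / cmin * psi1inv (eps * RInt h (1/2) t).
Proof.
  intros Ht Ht0. apply up_from_flux; [lra|apply (RInt_h_nonneg h); auto; lra|].
  pose proof (w_variation t0 t ltac:(lra) ltac:(lra)) as Hv.
  rewrite w_t0, Rminus_0_r in Hv.
  eapply Rle_trans; [exact Hv|]. apply Rmult_le_compat_l; [apply Q_nonneg|].
  apply (RInt_h_mono_l h); auto; lra.
Qed.

Lemma u_high_left : t0 <= 1/2 ->
  (forall e, 0 < e <= 1/2 -> RInt (fun s => psi1inv (eps * RInt h s (1/2))) e (1/2) <= cmin / 2) ->
  forall e, 0 < e < t0 -> M / 2 <= u e.
Proof.
  intros Ht0 Hsmall e He.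
  set (g := fun s => M / cmin * psi1inv (eps * RInt h s (1/2))).
  assert (Hg : forall a b, 0 < a <= b -> b <= 1/2 -> ex_RInt g a b).
  { intros. apply ex_RInt_scal_R, (ex_RInt_I_profile h h_cont h_nonneg psi1); auto.
    apply eps_nonneg. }
  assert (Hincr : Rabs (u t0 - u e) <= RInt g e t0).
  { apply (increment_le_RInt u up); auto; try lra; [apply Hg; lra|].
    intros; apply up_bound_left; lra. }
  assert (Htail : 0 <= RInt g t0 (1/2)).
  { apply RInt_ge_0; [lra|apply Hg; lra|]. intros x Hx. unfold g.
    apply Rmult_le_pos; [unfold Rdiv; apply Rmult_le_pos; [pose proof M_pos; lra|];
      left; apply Rinv_0_lt_compat; lra|].
    apply psi1inv_spec.
    apply Rmult_le_pos; [apply eps_nonneg|apply (RInt_h_nonneg h); auto; lra]. }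
  assert (Hall : RInt g e (1/2) <= M / 2).
  { unfold g. rewrite RInt_scal_R by (apply (ex_RInt_I_profile h h_cont h_nonneg psi1); auto;
      try lra; apply eps_nonneg).
    specialize (Hsmall e ltac:(lra)). pose proof M_pos.
    apply Rle_trans with (M / cmin * (cmin / 2)); [|right; field; lra].
    apply Rmult_le_compat_l; [|exact Hsmall]. unfold Rdiv. apply Rmult_le_pos; [lra|].
    left; apply Rinv_0_lt_compat; lra. }
  rewrite (Chasles_R g e t0 (1/2)) in Hall by (apply Hg; lra).
  rewrite u_t0 in Hincr. pose proof (Rle_abs (M - u e)). lra.
Qed.

Lemma u_high_right : 1/2 <= t0 ->
  (forall e, 1/2 <= e < 1 -> RInt (fun s => psi1inv (eps * RInt h (1/2) s)) (1/2) e <= cmin / 2) ->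
  forall e, t0 < e < 1 -> M / 2 <= u e.
Proof.
  intros Ht0 Hsmall e He.
  set (g := fun s => M / cmin * psi1inv (eps * RInt h (1/2) s)).
  assert (Hg : forall a b, 1/2 <= a <= b -> b < 1 -> ex_RInt g a b).
  { intros. apply ex_RInt_scal_R, (ex_RInt_J_profile h h_cont h_nonneg psi1); auto.
    apply eps_nonneg. }
  assert (Hincr : Rabs (u e - u t0) <= RInt g t0 e).
  { apply (increment_le_RInt u up); auto; try lra; [apply Hg; lra|].
    intros; apply up_bound_right; lra. }
  assert (Hhead : 0 <= RInt g (1/2) t0).
  { apply RInt_ge_0; [lra|apply Hg; lra|]. intros x Hx. unfold g.
    apply Rmult_le_pos; [unfold Rdiv; apply Rmult_le_pos; [pose proof M_pos; lra|];
      left; apply Rinv_0_lt_compat; lra|].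
    apply psi1inv_spec.
    apply Rmult_le_pos; [apply eps_nonneg|apply (RInt_h_nonneg h); auto; lra]. }
  assert (Hall : RInt g (1/2) e <= M / 2).
  { unfold g. rewrite RInt_scal_R by (apply (ex_RInt_J_profile h h_cont h_nonneg psi1); auto;
      try lra; apply eps_nonneg).
    specialize (Hsmall e ltac:(lra)). pose proof M_pos.
    apply Rle_trans with (M / cmin * (cmin / 2)); [|right; field; lra].
    apply Rmult_le_compat_l; [|exact Hsmall]. unfold Rdiv. apply Rmult_le_pos; [lra|].
    left; apply Rinv_0_lt_compat; lra. }
  rewrite (Chasles_R g (1/2) t0 e) in Hall by (apply Hg; lra).
  rewrite u_t0 in Hincr. pose proof (Rabs_Ropp (u e - M)). pose proof (Rle_abs (- (u e - M))). lra.
Qed.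

Hypothesis u_cont : cont_on u (fun t => 0 <= t <= 1).
Hypothesis u_0 : u 0 = 0.
Hypothesis u_1 : u 1 = 0.

(* Since u vanishes at both endpoints, small profile integrals are impossible. *)
Lemma small_profiles_absurd :
  (forall e, 0 < e <= 1/2 -> RInt (fun s => psi1inv (eps * RInt h s (1/2))) e (1/2) <= cmin / 2) ->
  (forall e, 1/2 <= e < 1 -> RInt (fun s => psi1inv (eps * RInt h (1/2) s)) (1/2) e <= cmin / 2) ->
  False.
Proof.
  intros HsL HsR. pose proof M_pos.
  destruct (Rle_lt_dec t0 (1/2)) as [Hl|Hr].
  - destruct (small_near_0 u (M / 2) t0 u_cont u_0) as [e [He Hue]]; [lra|lra|].
    pose proof (u_high_left Hl HsL e He). lra.
  - destruct (small_near_1 u (M / 2) t0 u_cont u_1) as [e [He Hue]]; [lra|lra|].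
    pose proof (u_high_right ltac:(lra) HsR e He). lra.
Qed.

End APriori.

Theorem theorem3p7
  (phi psi1 psi2 psi1inv c d f h : R -> R) (f0 finf : R)
  (Hphi : odd_inc_homeo phi)
  (HA : condA phi psi1 psi2)
  (Hpsi1inv : forall y, 0 <= y -> 0 <= psi1inv y /\ psi1 (psi1inv y) = y)
  (Hc : cont_on c (fun t => 0 <= t <= 1)) (Hcpos : forall t, 0 <= t <= 1 -> 0 < c t)
  (Hd : cont_on d (fun t => 0 <= t <= 1)) (Hdpos : forall t, 0 <= t <= 1 -> 0 < d t)
  (Hf : cont_on f (fun s => 0 <= s)) (Hfnn : forall s, 0 <= s -> 0 <= f s)
  (Hfpos : forall s, 0 < s -> 0 < f s)
  (Hh : cont_on h (fun t => 0 < t < 1)) (Hhnn : forall t, 0 < t < 1 -> 0 <= h t)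
  (Hhnz : exists t, 0 < t < 1 /\ h t <> 0)
  (Hhint : h_integrability h psi1inv)
  (Hgamma : gamma_condition h)
  (Hf0 : 0 <= f0) (Hf0lim : lim_at_0plus (fun s => f s / phi s) f0)
  (Hfinf : 0 <= finf) (Hfinflim : lim_at_infty (fun s => f s / phi s) finf) :
  exists lbar, 0 < lbar /\
    forall lam, 0 <= lam < lbar ->
      forall u : R -> R, ~ is_positive_solution phi c d h f lam u.
Proof.
  destruct HA as [[psi1_nonneg [psi1_inc _]] [_ HA]].
  destruct (cont_on01_pos_lower c Hc Hcpos) as [cmin [Hcmin Hc_lower]].
  destruct (cont_on01_pos_lower d Hd Hdpos) as [dmin [Hdmin Hd_lower]].
  destruct (f_le_K_phi phi Hphi f f0 finf Hf Hf0lim Hfinflim) as [K [HK Hf_le]].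
  destruct (profiles_small h Hh Hhnn psi1 psi1inv psi1_nonneg psi1_inc Hpsi1inv Hhint (cmin / 2))
    as [e0 [He0 Hsmall]]; [lra|].
  (* lambda < e0 dmin / K makes the scale eps = lambda K / dmin at most e0 *)
  exists (e0 * dmin / K). split; [apply Rdiv_lt_0_compat; [apply Rmult_lt_0_compat|]; lra|].
  intros lam Hlam u [[Hu [up [wp [Hud [Hupc [Hwd [Hwpc [Heq [Hu0 Hu1]]]]]]]]] Hpos].
  assert (Heps : 0 <= lam * K / dmin <= e0).
  { split; [apply Rdiv_le_0_compat; [apply Rmult_le_pos|]; lra|].
    apply (Rmult_le_reg_r (dmin / K)); [apply Rdiv_lt_0_compat; lra|].
    replace (lam * K / dmin * (dmin / K)) with lam by (field; lra). lra. }
  destruct (Hsmall _ Heps) as [HsL HsR].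
  destruct (interior_max u up Hu Hu0 Hu1 Hpos Hud) as [t0 [Ht0 [Hmax Hup0]]].
  apply (small_profiles_absurd phi psi1 psi1inv c d h f u up wp lam K cmin dmin (u t0) t0);
    auto; try lra.
  intros x y Hx Hy. apply HA; auto.
Qed.
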